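(* Let $\epsilon,\gamma>0$. Suppose there is an online algorithm $\mathcal{A}$ for online bipartite matching in the random edge arrival model which, on every instance with $\mathcal{G}(1)\le \frac12+\epsilon$, outputs a matching of expected size at least $\left(\frac12+\gamma\right)|\textsc{OPT}|$. Then there is an online algorithm whose competitive ratio is at least $\frac12+\delta$, where $\delta=\frac{\epsilon\gamma}{\frac12+\epsilon+\gamma}$.
   Context: Online bipartite matching in the random edge arrival model: the edges of a fixed bipartite graph $G$ with $m$ edges arrive one at a time in a uniformly random order $\pi$; the algorithm knows $m$, and must immediately and irrevocably decide for each arriving edge whether to add it to its matching (which must remain a matching). $\textsc{OPT}$ is a maximum matching of $G$. The competitive ratio is the infimum over instances of (expected size of the output, over $\pi$ and internal coins)$/|\textsc{OPT}|$. Greedy adds an arriving edge whenever the current set plus this edge is a matching. For $f\in[0,1]$, $T_f^\pi$ is the matching Greedy produces after the first $fm$ edges of $\pi$, and $\mathcal{G}(f)=\mathbb{E}_\pi[|T_f^\pi|]/|\textsc{OPT}|$ for uniformly random $\pi$. *)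

From HB Require Import structures.
From mathcomp Require Import all_boot all_order all_algebra.
From mathcomp Require Import perm.
Set Implicit Arguments. Unset Strict Implicit. Unset Printing Implicit Defensive.
Import Order.TTheory GRing.Theory Num.Theory.
Local Open Scope ring_scope.

(* A bipartite graph is a duplicate-free list of edges (u, v) where u is a
   left vertex and v is a right vertex (left and right vertices are labelled
   by nat in two separate name spaces). *)
Definition edge := (nat * nat)%type.

Definition bip_graph (G : seq edge) : bool := uniq G.

Definition can_add (M : seq edge) (e : edge) : bool :=
  (e.1 \notin map fst M) && (e.2 \notin map snd M).

Definition is_matching (M : seq edge) : bool :=
  uniq (map fst M) && uniq (map snd M).

Definition opt_size (G : seq edge) : nat :=
  \max_(S : {set 'I_(size G)} | is_matching [seq nth (0%N, 0%N) G (val i) | i in S]) #|S|.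

Definition arrival (G : seq edge) (s : 'S_(size G)) : seq edge :=
  [seq nth (0%N, 0%N) G (s i) | i <- enum 'I_(size G)].
Arguments arrival : clear implicits.

Definition greedy (arr : seq edge) : seq edge :=
  foldl (fun M e => if can_add M e then rcons M e else M) [::] arr.

Definition greedy_prefix (G : seq edge) (s : 'S_(size G)) (k : nat) : seq edge :=
  greedy (take k (arrival G s)).
Arguments greedy_prefix : clear implicits.

Definition E_perm (R : realFieldType) (G : seq edge) (X : 'S_(size G) -> R) : R :=
  ((size G)`!%:R)^-1 * \sum_(s : 'S_(size G)) X s.
Arguments E_perm {R} G X.

Definition calG1 (R : realFieldType) (G : seq edge) : R :=
  E_perm G (fun s => (size (greedy_prefix G s (size G)))%:R) / (opt_size G)%:R.

(* Randomized online algorithm (behavioural form): knowing m, the history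
   (arrived edges with its own previous decisions) and the current edge,
   it accepts the current edge with probability acc m h e. *)
Record online_alg (R : realFieldType) := OnlineAlg {
  acc : nat -> seq (edge * bool) -> edge -> R;
  acc_ge0 : forall m h e, 0 <= acc m h e;
  acc_le1 : forall m h e, acc m h e <= 1 }.

Definition accepted (h : seq (edge * bool)) : seq edge := map fst (filter snd h).

(* expected final matching size from history h with remaining arrivals arr;
   an acceptance that would violate the matching constraint is not allowed
   (treated as a rejection). *)
Fixpoint run_val (R : realFieldType) (a : seq (edge * bool) -> edge -> R)
    (arr : seq edge) (h : seq (edge * bool)) : R :=
  match arr with
  | [::] => (size (accepted h))%:R
  | e :: rest =>
      let p := if can_add (accepted h) e then a h e else 0 in
      p * run_val a rest (rcons h (e, true))
        + (1 - p) * run_val a rest (rcons h (e, false))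
  end.

Definition alg_value (R : realFieldType) (A : online_alg R) (G : seq edge) : R :=
  E_perm G (fun s => run_val (acc A (size G)) (arrival G s) [::]).

Definition instance (G : seq edge) : Prop := bip_graph G /\ (0 < size G)%N.

Definition comp_ratio_ge (R : realFieldType) (A : online_alg R) (c : R) : Prop :=
  forall G, instance G -> c * (opt_size G)%:R <= alg_value A G.

From HB Require Import structures.
From mathcomp Require Import all_boot all_order all_algebra.
From mathcomp Require Import perm ring lra.
Import Order.TTheory GRing.Theory Num.Theory.
Local Open Scope ring_scope.

(* Run A with probability p = eps / (1/2 + eps + gam) and Greedy otherwise.
   Greedy outputs a maximal matching, hence always at least |OPT|/2.  If
   G(1) <= 1/2 + eps, the A-branch gains (1/2 + gam)|OPT|; otherwise the
   Greedy branch alone yields (1/2 + eps)|OPT|; the choice of p makes both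
   cases give (1/2 + delta)|OPT|.  The coin flip between the two algorithms
   is turned into a single online algorithm that, given the history, accepts
   an edge with the average of the two acceptance probabilities weighted by
   the posterior probabilities of the two branches. *)

Definition greedy_step (M : seq edge) (e : edge) : seq edge :=
  if can_add M e then rcons M e else M.

Lemma greedyE (arr : seq edge) : greedy arr = foldl greedy_step [::] arr.
Proof. by []. Qed.

Lemma can_add_subset {M N : seq edge} {e : edge} :
  {subset M <= N} -> can_add N e -> can_add M e.
Proof.
move=> sMN /andP[e1N e2N]; apply/andP; split.
  by apply: contra e1N => /mapP[x /sMN xN ->]; apply: map_f.
by apply: contra e2N => /mapP[x /sMN xN ->]; apply: map_f.
Qed.

Lemma subset_foldl_greedy_step (arr M : seq edge) :
  {subset M <= foldl greedy_step M arr}.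
Proof.
elim: arr M => [|x arr IH] M //= y yM; apply: IH.
by rewrite /greedy_step; case: ifP => // _; rewrite mem_rcons inE yM orbT.
Qed.

Lemma foldl_greedy_step_maximal (arr M : seq edge) (e : edge) :
  e \in arr -> ~~ can_add (foldl greedy_step M arr) e.
Proof.
elim: arr M => [|x arr IH] M //=; rewrite inE => /orP[/eqP-> | /IH //].
apply/negP => /(can_add_subset (subset_foldl_greedy_step _ _)).
rewrite /greedy_step; case: ifP => [_|-> //].
by rewrite /can_add map_rcons mem_rcons inE eqxx.
Qed.

Lemma count_mem_uniq_le (T : eqType) (s F : seq T) :
  uniq s -> (count (mem F) s <= size F)%N.
Proof.
move=> us; rewrite -size_filter; apply: uniq_leq_size; first exact: filter_uniq.
by move=> x; rewrite mem_filter => /andP[].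
Qed.

(* Each edge of L is blocked by an endpoint it shares with M, and each vertex
   of M blocks at most one edge of the matching L. *)
Lemma size_matching_le_blocking (L M : seq edge) :
  is_matching L -> (forall x, x \in L -> ~~ can_add M x) ->
  (size L <= 2 * size M)%N.
Proof.
move=> /andP[uL1 uL2] blocked.
have cover : (size L <= count (mem (map fst M)) (map fst L)
                        + count (mem (map snd M)) (map snd L))%N.
  rewrite !count_map -count_predUI; apply: leq_trans (leq_addr _ _).
  rewrite -{1}(count_predT L); apply: eq_leq; apply: eq_in_count => x /blocked /=.
  by rewrite /can_add negb_and !negbK => /orP[] ->; rewrite ?orbT.
apply: leq_trans cover _; rewrite mul2n -addnn.
apply: leq_add.
  by rewrite -(size_map fst) count_mem_uniq_le.
by rewrite -(size_map snd) count_mem_uniq_le.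
Qed.

Lemma mem_arrival (G : seq edge) (s : 'S_(size G)) (i : 'I_(size G)) :
  nth (0%N, 0%N) G i \in arrival G s.
Proof. by apply/mapP; exists (s^-1 i)%g; rewrite ?mem_enum ?permKV. Qed.

Lemma size_arrival (G : seq edge) (s : 'S_(size G)) : size (arrival G s) = size G.
Proof. by rewrite size_map size_enum_ord. Qed.

Lemma opt_size_le_greedy (G : seq edge) (s : 'S_(size G)) :
  (opt_size G <= 2 * size (greedy (arrival G s)))%N.
Proof.
apply/bigmax_leqP => S mS; rewrite cardE -(size_map (fun i => nth (0%N, 0%N) G (val i))).
apply: size_matching_le_blocking mS _ => x /mapP[i _ ->].
by rewrite greedyE foldl_greedy_step_maximal ?mem_arrival.
Qed.

Section Expectation.
Variables (R : realFieldType) (G : seq edge).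
Implicit Types X Y : 'S_(size G) -> R.

Lemma E_permD X Y c d :
  E_perm G (fun s => c * X s + d * Y s) = c * E_perm G X + d * E_perm G Y.
Proof. by rewrite /E_perm big_split /= -!mulr_sumr; ring. Qed.

Lemma E_perm_le X Y : (forall s, X s <= Y s) -> E_perm G X <= E_perm G Y.
Proof. by move=> XY; rewrite /E_perm ler_wpM2l ?invr_ge0 ?ler0n ?ler_sum. Qed.

Lemma E_perm_cst (c : R) : E_perm G (fun => c) = c.
Proof.
rewrite /E_perm sumr_const card_Sn -[c *+ _]mulr_natl mulrA mulVf ?mul1r //.
by rewrite pnatr_eq0 -lt0n fact_gt0.
Qed.

Lemma E_perm_ge X (c : R) : (forall s, c <= X s) -> c <= E_perm G X.
Proof. by move=> cX; rewrite -[c]E_perm_cst; apply: E_perm_le. Qed.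

Lemma eq_E_perm X Y : X =1 Y -> E_perm G X = E_perm G Y.
Proof. by move=> XY; rewrite /E_perm (eq_bigr _ (fun s _ => XY s)). Qed.

End Expectation.

Section Greedy.
Variable R : realFieldType.

Definition greedy_value (G : seq edge) : R :=
  E_perm G (fun s => (size (greedy (arrival G s)))%:R).

Lemma greedy_value_ge_half (G : seq edge) : (opt_size G)%:R / 2 <= greedy_value G.
Proof.
apply: E_perm_ge => s.
by rewrite ler_pdivrMr // -natrM mulnC ler_nat opt_size_le_greedy.
Qed.

Lemma calG1E (G : seq edge) : calG1 R G = greedy_value G / (opt_size G)%:R.
Proof.
congr (_ / _); apply: eq_E_perm => s.
by rewrite /greedy_prefix take_oversize ?size_arrival.
Qed.

Lemma greedy_value_ge (G : seq edge) (c : R) :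
  c <= calG1 R G -> c * (opt_size G)%:R <= greedy_value G.
Proof.
rewrite calG1E; have [-> _|o_gt0] := posnP (opt_size G).
  by rewrite mulr0; apply: E_perm_ge => s; rewrite ler0n.
by rewrite ler_pdivlMr // ltr0n.
Qed.

Lemma accepted_rcons (h : seq (edge * bool)) (e : edge) (b : bool) :
  accepted (rcons h (e, b)) = if b then rcons (accepted h) e else accepted h.
Proof. by rewrite /accepted filter_rcons; case: b => //=; rewrite map_rcons. Qed.

Lemma run_val_accept_all (arr : seq edge) (h : seq (edge * bool)) :
  run_val (fun _ _ => 1 : R) arr h = (size (foldl greedy_step (accepted h) arr))%:R.
Proof.
elim: arr h => [|e arr IH] h //=.
rewrite !IH !accepted_rcons /greedy_step.
by case: ifP => _; rewrite ?subrr ?subr0 mul1r mul0r ?addr0 ?add0r.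
Qed.

Definition greedy_alg : online_alg R :=
  @OnlineAlg R (fun _ _ _ => 1) (fun _ _ _ => ler01) (fun _ _ _ => lexx 1).

Lemma alg_value_greedy_alg (G : seq edge) : alg_value greedy_alg G = greedy_value G.
Proof. by apply: eq_E_perm => s; rewrite run_val_accept_all. Qed.

End Greedy.

Section History.
Context {R : realFieldType}.
Variable (a : seq (edge * bool) -> edge -> R).
Hypothesis a01 : forall h e, 0 <= a h e <= 1.

Definition accept_prob (h : seq (edge * bool)) (e : edge) : R :=
  if can_add (accepted h) e then a h e else 0.

Definition step_prob (h : seq (edge * bool)) (x : edge * bool) : R :=
  if x.2 then accept_prob h x.1 else 1 - accept_prob h x.1.

Fixpoint history_prob (pre h : seq (edge * bool)) : R :=
  if h is x :: t then step_prob pre x * history_prob (rcons pre x) t else 1.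

Lemma history_prob_rcons pre h x :
  history_prob pre (rcons h x) = history_prob pre h * step_prob (pre ++ h) x.
Proof.
elim: h pre => [|y t IH] pre /=; first by rewrite cats0 mulr1 mul1r.
by rewrite IH cat_rcons mulrA.
Qed.

Lemma accept_prob01 h e : 0 <= accept_prob h e <= 1.
Proof. by rewrite /accept_prob; case: ifP; rewrite ?a01 ?lexx ?ler01. Qed.

Lemma history_prob_ge0 pre h : 0 <= history_prob pre h.
Proof.
elim: h pre => [|x t IH] pre /=; first exact: ler01.
have /andP[q0 q1] := accept_prob01 pre x.1.
by rewrite mulr_ge0 // /step_prob; case: x.2; rewrite ?subr_ge0.
Qed.

Lemma run_val_ge0 arr h : 0 <= run_val a arr h.
Proof.
elim: arr h => [|e arr IH] h /=; first exact: ler0n.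
have /andP[q0 q1] := accept_prob01 h e.
by rewrite addr_ge0 // mulr_ge0 ?IH ?subr_ge0.
Qed.

End History.

Section Mixture.
Context {R : realFieldType}.
Variables (a g : seq (edge * bool) -> edge -> R) (p : R).
Hypotheses (a01 : forall h e, 0 <= a h e <= 1) (g01 : forall h e, 0 <= g h e <= 1).
Hypothesis p01 : 0 <= p <= 1.

Definition weight_a (h : seq (edge * bool)) : R := p * history_prob a [::] h.
Definition weight_g (h : seq (edge * bool)) : R := (1 - p) * history_prob g [::] h.

(* The total weight vanishes only on histories that neither branch produces,
   where the value of [mix_acc] is irrelevant. *)
Definition mix_acc (h : seq (edge * bool)) (e : edge) : R :=
  let W := weight_a h + weight_g h in
  if W == 0 then 0 else (weight_a h * a h e + weight_g h * g h e) / W.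

Lemma weight_a_ge0 h : 0 <= weight_a h.
Proof. by case/andP: p01 => p0 _; rewrite mulr_ge0 ?history_prob_ge0. Qed.

Lemma weight_g_ge0 h : 0 <= weight_g h.
Proof. by case/andP: p01 => _ p1; rewrite mulr_ge0 ?subr_ge0 ?history_prob_ge0. Qed.

Lemma mix_acc01 h e : 0 <= mix_acc h e <= 1.
Proof.
rewrite /mix_acc; case: eqP => [_|W0]; first by rewrite lexx ler01.
have := weight_a_ge0 h; have := weight_g_ge0 h => Wg Wa.
have W_gt0 : 0 < weight_a h + weight_g h by rewrite lt_def addr_ge0 // andbT; apply/eqP.
have /andP[a0 a1] := a01 h e; have /andP[g0 g1] := g01 h e.
rewrite divr_ge0 ?(ltW W_gt0) ?addr_ge0 ?(mulr_ge0 Wa) ?(mulr_ge0 Wg) //=.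
by rewrite ler_pdivrMr // mul1r lerD // ler_piMr.
Qed.

Lemma weighted_accept_prob h e :
  (weight_a h + weight_g h) * accept_prob mix_acc h e
  = weight_a h * accept_prob a h e + weight_g h * accept_prob g h e.
Proof.
rewrite /accept_prob; case: ifP => _; last by rewrite !mulr0 addr0.
rewrite /mix_acc; case: eqP => [W0|/eqP W0]; last by rewrite mulrC divfK.
have := weight_a_ge0 h; have := weight_g_ge0 h => Wg Wa.
have [-> ->] : weight_a h = 0 /\ weight_g h = 0.
  by split; apply/eqP; rewrite eq_le ?Wa ?Wg andbT -W0 ?lerDl ?lerDr.
by rewrite add0r !mul0r add0r.
Qed.

(* The Bayesian posterior update: the weights of the two branches after the
   next decision are the current weights times the branch's step probability. *)
Lemma run_val_mix arr h :
  (weight_a h + weight_g h) * run_val mix_acc arr h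
  = weight_a h * run_val a arr h + weight_g h * run_val g arr h.
Proof.
elim: arr h => [|e arr IH] h /=; first by rewrite mulrDl.
have wa b : weight_a (rcons h (e, b)) = weight_a h * step_prob a h (e, b).
  by rewrite /weight_a history_prob_rcons mulrA.
have wg b : weight_g (rcons h (e, b)) = weight_g h * step_prob g h (e, b).
  by rewrite /weight_g history_prob_rcons mulrA.
have key := weighted_accept_prob h e.
have w_true : weight_a (rcons h (e, true)) + weight_g (rcons h (e, true))
              = (weight_a h + weight_g h) * accept_prob mix_acc h e.
  by rewrite key wa wg.
have w_false : weight_a (rcons h (e, false)) + weight_g (rcons h (e, false))
               = (weight_a h + weight_g h) * (1 - accept_prob mix_acc h e).
  by rewrite mulrBr key wa wg /step_prob /=; ring.
rewrite -!/(accept_prob _ h e) mulrDr !mulrA -w_true -w_false !IH !wa !wg /step_prob /=.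
ring.
Qed.

Lemma run_val_mix_nil arr :
  run_val mix_acc arr [::] = p * run_val a arr [::] + (1 - p) * run_val g arr [::].
Proof.
by have := run_val_mix arr [::]; rewrite /weight_a /weight_g /= !mulr1 addrC subrK mul1r.
Qed.

End Mixture.

Lemma acc01 {R : realFieldType} (A : online_alg R) m h e : 0 <= acc A m h e <= 1.
Proof. by rewrite acc_ge0 acc_le1. Qed.

Section MixtureAlg.
Context {R : realFieldType}.
Variables (A1 A2 : online_alg R) (p : R).
Hypothesis p01 : 0 <= p <= 1.

Let mix (m : nat) : seq (edge * bool) -> edge -> R := mix_acc (acc A1 m) (acc A2 m) p.

Let mix01 m h e : 0 <= mix m h e <= 1.
Proof. exact: mix_acc01 (acc01 A1 m) (acc01 A2 m) p01 h e. Qed.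

Definition mix_alg : online_alg R :=
  @OnlineAlg R mix (fun m h e => proj1 (andP (mix01 m h e)))
                   (fun m h e => proj2 (andP (mix01 m h e))).

Lemma alg_value_mix_alg (G : seq edge) :
  alg_value mix_alg G = p * alg_value A1 G + (1 - p) * alg_value A2 G.
Proof.
rewrite /alg_value -E_permD; apply: eq_E_perm => s.
exact: run_val_mix_nil (acc01 A1 (size G)) (acc01 A2 (size G)) p01 (arrival G s).
Qed.

End MixtureAlg.
Arguments mix_alg {R} A1 A2 {p} p01.

Definition branch_prob {R : realFieldType} (eps gam : R) : R :=
  eps / (1/2 + eps + gam).

Lemma branch_prob01 {R : realFieldType} {eps gam : R} :
  0 < eps -> 0 < gam -> 0 <= branch_prob eps gam <= 1.
Proof.
move=> eps_gt0 gam_gt0; have D_gt0 : 0 < 1/2 + eps + gam by lra.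
rewrite /branch_prob divr_ge0 ?(ltW eps_gt0) ?(ltW D_gt0) //=.
by rewrite ler_pdivrMr // mul1r; lra.
Qed.

Lemma mixture_bound (R : realFieldType) (eps gam o vA vG : R) :
  0 < eps -> 0 < gam -> 0 <= vA -> o / 2 <= vG ->
  (1/2 + gam) * o <= vA \/ (1/2 + eps) * o <= vG ->
  (1/2 + eps * gam / (1/2 + eps + gam)) * o
    <= branch_prob eps gam * vA + (1 - branch_prob eps gam) * vG.
Proof.
move=> eps_gt0 gam_gt0 vA_ge0 vG_half good.
have D2_neq0 : 1 + eps * 2 + gam * 2 != 0 by rewrite gt_eqF //; lra.
have /andP[p_ge0 p_le1] := branch_prob01 eps_gt0 gam_gt0.
have q_ge0 : 0 <= 1 - branch_prob eps gam by rewrite subr_ge0.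
case: good => [vA_good | vG_good].
  have -> : (1/2 + eps * gam / (1/2 + eps + gam)) * o
      = branch_prob eps gam * ((1/2 + gam) * o) + (1 - branch_prob eps gam) * (o / 2).
    by rewrite /branch_prob; field.
  by rewrite lerD // ler_wpM2l.
have -> : (1/2 + eps * gam / (1/2 + eps + gam)) * o
    = (1 - branch_prob eps gam) * ((1/2 + eps) * o).
  by rewrite /branch_prob; field.
by rewrite -[X in X <= _]add0r lerD ?(mulr_ge0 p_ge0 vA_ge0) ?(ler_wpM2l q_ge0 vG_good).
Qed.

Theorem lemma1 (R : realFieldType) (eps gam : R) :
  0 < eps -> 0 < gam ->
  (exists A : online_alg R,
     forall G : seq edge, instance G ->
       calG1 R G <= 1/2 + eps ->
       (1/2 + gam) * (opt_size G)%:R <= alg_value A G) ->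
  exists B : online_alg R,
    comp_ratio_ge B (1/2 + eps * gam / (1/2 + eps + gam)).
Proof.
move=> eps_gt0 gam_gt0 [A hA].
exists (mix_alg A (greedy_alg R) (branch_prob01 eps_gt0 gam_gt0)) => G instG.
rewrite alg_value_mix_alg alg_value_greedy_alg.
apply: mixture_bound => //.
- by apply: E_perm_ge => s; apply/run_val_ge0/acc01.
- exact: greedy_value_ge_half.
have [small|large] := lerP (calG1 R G) (1/2 + eps).
  by left; apply: hA.
by right; apply/greedy_value_ge/ltW.
Qed.
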